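(* Let $\mathcal{F}$ be a semi-metric space with semi-metric $d$, $x\in\mathcal{F}$, and $X_1,X_2,\ldots$ i.i.d. $\mathcal{F}$-valued random elements. Let $\varphi(h)=P(X_1\in B(x,h))$ where $B(x,h)=\{x':d(x',x)\le h\}$, and $\varphi^{-1}(t)=\inf\{h:\varphi(h)\ge t\}$. Let $k=k_n$ satisfy $k/n\to0$ and $k/\log n\to\infty$, and let $H=\inf\{h\in\mathbb{R}:\sum_{i=1}^nI\{X_i\in B(x,h)\}\ge k\}$. Then $P\big(H>\varphi^{-1}(2k/n)\ \text{infinitely often}\big)=0$, i.e. almost surely $H\le\varphi^{-1}(2k/n)$ for all $n$ large enough. *)

From HB Require Import structures.
From mathcomp Require Import all_boot all_order all_algebra.
From mathcomp Require Import all_classical all_reals all_analysis.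
Set Implicit Arguments. Unset Strict Implicit. Unset Printing Implicit Defensive.
Import Order.TTheory GRing.Theory Num.Theory.
Import numFieldNormedType.Exports.
Local Open Scope classical_set_scope.
Local Open Scope ring_scope.

Section Defs.
Context {R : realType} {dF : measure_display} {F : measurableType dF}.

(* Semi-metric in the sense of Ferraty--Vieu: a pseudometric
   (d x' x = 0 does not force x' = x). *)
Definition semi_metric (d : F -> F -> R) : Prop :=
  [/\ forall a b, 0 <= d a b,
      forall a, d a a = 0,
      forall a b, d a b = d b a &
      forall a b c, d a c <= d a b + d b c].

Definition cball (d : F -> F -> R) (x : F) (h : R) : set F :=
  [set x' | d x' x <= h].

Context {dO : measure_display} {Om : measurableType dO}.

Definition mutually_independent (P : probability Om R) (X : nat -> Om -> F) :=
  forall (s : seq nat) (A : nat -> set F), uniq s ->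
    (forall i, measurable (A i)) ->
    P (\bigcap_(i in [set i | i \in s]) (X i @^-1` A i)) =
    (\prod_(i <- s) P (X i @^-1` A i))%E.

Definition identically_distributed (P : probability Om R) (X : nat -> Om -> F) :=
  forall i (A : set F), measurable A -> P (X i @^-1` A) = P (X 0%N @^-1` A).

Definition small_ball_prob (P : probability Om R) (X : nat -> Om -> F)
  (d : F -> F -> R) (x : F) (h : R) : \bar R := P (X 0%N @^-1` cball d x h).

(* phi^{-1}(t) = inf {h : phi(h) >= t}  (in \bar R; inf of empty set = +oo) *)
Definition small_ball_inv (P : probability Om R) (X : nat -> Om -> F)
  (d : F -> F -> R) (x : F) (t : R) : \bar R :=
  ereal_inf [set h%:E | h in [set h : R | (t%:E <= small_ball_prob P X d x h)%E]].

(* H_n = inf {h in R : sum_{i=1}^n 1{X_i in B(x,h)} >= k}  (X_i is X (i-1)) *)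
Definition knn_radius (X : nat -> Om -> F) (d : F -> F -> R) (x : F)
  (k n : nat) (w : Om) : \bar R :=
  ereal_inf [set h%:E | h in
    [set h : R | (k <= \sum_(i < n) nat_of_bool (d (X i w) x <= h)%R)%N]].

End Defs.

From HB Require Import structures.
From mathcomp Require Import all_boot all_order all_algebra.
From mathcomp Require Import all_classical all_reals all_analysis.
From mathcomp Require Import ring lra zify.
Import Order.TTheory GRing.Theory Num.Theory.
Import numFieldNormedType.Exports.
Local Open Scope classical_set_scope.
Local Open Scope ring_scope.

(* Since phi is right-continuous, h_n := phi^{-1}(2k/n) satisfies
   phi(h_n) >= 2k/n whenever it is finite, and H_n > h_n means that fewer
   than k of X_1, ..., X_n fall in B(x, h_n).  For the number S_n of
   successes among n independent trials of success probability p,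
   P(S_n < j) <= 2^j (1 - p/2)^n, by induction on n splitting on the last
   trial.  With p >= 2k/n and k >= 3 ln n / (1 - ln 2) this is at most
   n^{-3}, which is summable, and Borel-Cantelli concludes. *)

Lemma ln2_lt1 {R : realType} : ln (2 : R) < 1.
Proof.
have lt2e : (2 : R) < expR 1.
  by have := @expR_gt1Dx R 1 (oner_neq0 _); rewrite -[1 + 1]/2%:R.
by rewrite -ltr_expR lnK // posrE.
Qed.

Lemma chernoff_bound_le_inv_cube {R : realType} (p : R) k n : 0 <= p -> p <= 1 ->
  (0 < n)%N -> 2 * k%:R / n%:R <= p -> 3 * ln (n%:R : R) <= (1 - ln 2) * k%:R ->
  2 ^+ k * (1 - p / 2) ^+ n <= (n%:R ^+ 3)^-1.
Proof.
move=> p_ge0 p_le1 n_gt0 kp kn.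
have n_gt0' : (0 : R) < n%:R by rewrite ltr0n.
have q_le : (1 - p / 2) ^+ n <= expR (- k%:R).
  apply: (@le_trans _ _ (expR (- (p / 2)) ^+ n)).
    rewrite lerXn2r ?nnegrE ?expR_ge0 //; first lra.
    exact: expR_ge1Dx.
  by rewrite -expRM_natl ler_expR; move: kp; rewrite ler_pdivrMr // => kp; lra.
have two_pow : (2 : R) ^+ k = expR (k%:R * ln 2).
  by rewrite expRM_natl lnK // posrE.
apply: le_trans (ler_wpM2l (exprn_ge0 _ (ler0n _ 2)) q_le) _.
rewrite two_pow -expRD -[_ ^+ 3](lnK (exprn_gt0 3 n_gt0')) -expRN ler_expR.
by rewrite lnXn //; lra.
Qed.

Lemma inv_cube_le_telescope {R : realType} n : (3 <= n)%N ->
  ((n%:R : R) ^+ 3)^-1 <= (n.+1%:R)^-1 - (n.+2%:R)^-1.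
Proof.
move=> n_ge3.
have -> : (n.+1%:R : R)^-1 - (n.+2%:R)^-1 = ((n.+1 * n.+2)%:R)^-1.
  rewrite natrM -[n.+2]addn1 -[n.+1]addn1 natrD -addnA natrD; field.
  by apply/andP; split; rewrite lt0r_neq0 // ltr_wpDl.
rewrite lef_pV2 ?posrE ?exprn_gt0 ?ltr0n //; last by lia.
by rewrite -natrX ler_nat; nia.
Qed.

Lemma telescope_inv_ge0 {R : realType} n : (0 : R) <= (n.+1%:R)^-1 - (n.+2%:R)^-1.
Proof. by rewrite subr_ge0 lef_pV2 ?posrE ?ltr0n // ler_nat. Qed.

Lemma nneseries_le_telescope_lt_oo {R : realType} {u : (\bar R)^nat} :
  (forall n, 0 <= u n)%E ->
  (forall n, u n <= ((n.+1%:R)^-1 - (n.+2%:R)^-1)%:E)%E ->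
  (\sum_(n <oo) u n < +oo)%E.
Proof.
move=> u_ge0 u_le; apply: le_lt_trans (ltry 1).
apply: le_trans (lee_nneseries (fun n _ _ => u_ge0 n) (fun n _ => u_le n)) _.
apply: lime_le.
  by apply: is_cvg_nneseries => n _ _; rewrite lee_fin telescope_inv_ge0.
apply: nearW => m; rewrite sumEFin lee_fin.
under eq_bigr do rewrite -opprB.
rewrite sumrN (telescope_sumr (fun i => (i.+1%:R : R)^-1)) // opprB invr1.
by rewrite gerBl invr_ge0.
Qed.

Lemma eventually_ln_le {R : realType} (k : nat -> nat) (a c : R) : 0 < a ->
  (fun n => (k n)%:R / ln (n%:R) : R) @ \oo --> +oo ->
  \forall n \near \oo, c * ln (n%:R : R) <= a * (k n)%:R.
Proof.
move=> a_gt0 k_ln; near=> n.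
have ln_gt0 : 0 < ln (n%:R : R).
  by rewrite ln_gt0 // ltr1n; near: n; exact: nbhs_infty_ge.
have : c / a <= (k n)%:R / ln n%:R by near: n; exact: cvgry_ge.
by rewrite ler_pdivrMr // mulrAC ler_pdivlMr // [_ * a]mulrC.
Unshelve. all: by end_near.
Qed.

Lemma gt0_of_ln_le {R : realType} (a c : R) k n : 0 < c -> (1 < n)%N ->
  c * ln (n%:R : R) <= a * k%:R -> (0 < k)%N.
Proof.
move=> c_gt0 n_gt1; rewrite lt0n; apply: contraTneq => ->; rewrite mulr0 -ltNge.
by apply: mulr_gt0 => //; rewrite ln_gt0 // ltr1n.
Qed.

Lemma ae_eventually_notin {d} {T : measurableType d} {R : realType}
  (mu : {measure set T -> \bar R}) {A : (set T)^nat} :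
  (forall n, measurable (A n)) -> (\sum_(n <oo) mu (A n) < +oo)%E ->
  {ae mu, forall w, \forall n \near \oo, ~ A n w}.
Proof.
move=> mA sumA; exists (lim_sup_set A); split.
- by apply: bigcap_measurableType => m _; apply: bigcup_measurable.
- exact: lim_sup_set_cvg0.
move=> w /= not_ev m _; apply: contrapT => not_A; apply: not_ev.
by exists m => // n /= mn An; apply: not_A; exists n.
Qed.

Section real_probability.
Context {R : realType} {d : measure_display} {T : measurableType d}
  (P : probability T R).

Definition prob (A : set T) : R := fine (P A).

Lemma probE A : measurable A -> P A = (prob A)%:E.
Proof. by move=> mA; rewrite /prob fineK // fin_num_measure. Qed.

Lemma prob_ge0 A : 0 <= prob A.
Proof. by rewrite /prob fine_ge0. Qed.

Lemma prob_le1 A : measurable A -> prob A <= 1.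
Proof. by move=> mA; rewrite -lee_fin -probE // probability_le1. Qed.

Lemma le_prob A B : measurable A -> measurable B -> A `<=` B ->
  prob A <= prob B.
Proof. by move=> mA mB AB; rewrite -lee_fin -!probE // le_measure ?inE. Qed.

Lemma prob_setU_le A B : measurable A -> measurable B ->
  prob (A `|` B) <= prob A + prob B.
Proof.
move=> mA mB; rewrite -lee_fin EFinD -!probE //; last exact: measurableU.
exact: measureU2.
Qed.

Lemma prob_setT : prob setT = 1.
Proof. by rewrite /prob probability_setT. Qed.

Lemma prob_setC A : measurable A -> prob (~` A) = 1 - prob A.
Proof. by move=> mA; rewrite {1}/prob probability_setC // (probE _ mA). Qed.

End real_probability.

Section independent_trials.
Context {R : realType} {dF : measure_display} {F : measurableType dF}
  {dO : measure_display} {Om : measurableType dO}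
  (P : probability Om R) (X : nat -> Om -> F).
Hypotheses (mX : forall i, measurable_fun setT (X i))
  (indep : mutually_independent P X) (idd : identically_distributed P X).

Lemma measurable_preimage i B : measurable B -> measurable (X i @^-1` B).
Proof. by move=> mB; rewrite -[X i @^-1` B]setTI; apply: mX. Qed.

Definition cylinder (s : seq nat) (A : nat -> set F) :=
  \bigcap_(i in [set i | i \in s]) (X i @^-1` A i).

Lemma measurable_cylinder s A : (forall i, measurable (A i)) ->
  measurable (cylinder s A).
Proof.
by move=> mA; apply: bigcap_measurableType => i _; apply: measurable_preimage.
Qed.

Lemma cylinder_nil A : cylinder [::] A = setT.
Proof. by apply/seteqP; split=> w //= _ i. Qed.

Lemma cylinder_cons n s A : cylinder (n :: s) A = X n @^-1` A n `&` cylinder s A.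
Proof.
apply/seteqP; split=> w /=.
  move=> Hw; split; first by apply: (Hw n); rewrite /= inE eqxx.
  by move=> i /= si; apply: Hw; rewrite /= inE si orbT.
by move=> [Hn Hs] i /=; rewrite inE => /orP[/eqP->//|si]; apply: Hs.
Qed.

Lemma eq_cylinder s A A' : {in s, A =1 A'} -> cylinder s A = cylinder s A'.
Proof.
by move=> AA'; apply/seteqP; split=> w Hw i si; have := Hw i si; rewrite /= AA'.
Qed.

Lemma cylinder_update n s A B : n \notin s ->
  cylinder s (fun i => if i == n then B else A i) = cylinder s A.
Proof.
by move=> ns; apply: eq_cylinder => i si; case: eqP => // in_; rewrite -in_ si in ns.
Qed.

Lemma cylinder_cons_update n s A B : n \notin s ->
  cylinder (n :: s) (fun i => if i == n then B else A i) =
  X n @^-1` B `&` cylinder s A.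
Proof. by move=> ns; rewrite cylinder_cons eqxx cylinder_update. Qed.

Lemma prob_preimageI_cylinder n s A B : n \notin s -> uniq s ->
  (forall i, measurable (A i)) -> measurable B ->
  prob P (X n @^-1` B `&` cylinder s A) =
  prob P (X n @^-1` B) * prob P (cylinder s A).
Proof.
move=> ns us mA mB.
pose A' i := if i == n then B else A i.
have mA' i : measurable (A' i) by rewrite /A'; case: ifP.
have := indep (n :: s) A'; rewrite /= ns us => /(_ isT mA').
rewrite -/(cylinder (n :: s) A') cylinder_cons cylinder_update // big_cons.
rewrite /A' eqxx (eq_big_seq (fun j => P (X j @^-1` A j))); last first.
  by move=> i si; rewrite /A'; case: eqP => // in_; rewrite -in_ si in ns.
have mC : measurable (cylinder s A) by exact: measurable_cylinder.
have mXB : measurable (X n @^-1` B) by exact: measurable_preimage.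
rewrite -(indep s A us mA) -/(cylinder s A) !probE //; last exact: measurableI.
by rewrite -EFinM => -[].
Qed.

Variables (b : pred F).
Hypothesis mb : measurable [set y | b y].

Definition hits n w := (\sum_(i < n) b (X i w))%N.

Let E i := X i @^-1` [set y | b y].
Let p := prob P (E 0).

Lemma prob_hit i : prob P (E i) = p.
Proof. by rewrite /p /E /prob idd. Qed.

Lemma prob_miss i : prob P (X i @^-1` ~` [set y | b y]) = 1 - p.
Proof.
by rewrite -preimage_setC prob_setC ?prob_hit //; exact: measurable_preimage.
Qed.

Lemma hits_ltS n j : [set w | (hits n.+1 w < j.+1)%N] =
  ([set w | (hits n w < j.+1)%N] `&` ~` E n) `|`
  ([set w | (hits n w < j)%N] `&` E n).
Proof.
apply/seteqP; split=> w; rewrite /hits /E /= big_ord_recr /=;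
  case: (b (X n w)) => /=; rewrite ?addn1 ?addn0 ?ltnS.
- by right.
- by left.
- by case=> -[].
- by case=> -[].
Qed.

Lemma measurable_hits_lt n j : measurable [set w | (hits n w < j)%N].
Proof.
elim: n j => [|n IH] [|j].
- by rewrite [X in measurable X](_ : _ = set0) //; apply/seteqP; split=> w.
- rewrite [X in measurable X](_ : _ = setT) //; apply/seteqP; split=> w //=.
  by rewrite /hits big_ord0.
- by rewrite [X in measurable X](_ : _ = set0) //; apply/seteqP; split=> w.
rewrite hits_ltS; apply: measurableU; apply: measurableI => //;
  last exact: measurable_preimage.
by apply: measurableC; apply: measurable_preimage.
Qed.

Lemma prob_hits_ltI_cylinder n j s A : uniq s -> {in s, forall i, n <= i}%N ->
  (forall i, measurable (A i)) ->
  prob P ([set w | (hits n w < j)%N] `&` cylinder s A) <=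
    2 ^+ j * (1 - p / 2) ^+ n * prob P (cylinder s A).
Proof.
have q0 : 0 <= 1 - p / 2.
  have p1 : p <= 1 by apply: prob_le1; exact: measurable_preimage.
  have := prob_ge0 P (E 0); rewrite -/p; lra.
have mHC n' j' s' A' : (forall i, measurable (A' i)) ->
    measurable ([set w | (hits n' w < j')%N] `&` cylinder s' A').
  move=> mA'; apply: measurableI; first exact: measurable_hits_lt.
  exact: measurable_cylinder.
elim: n j s A => [|n IH] j s A us sn mA.
  rewrite expr0 mulr1; apply: le_trans (ler_peMl (prob_ge0 _ _) _).
  - apply: le_prob; [exact: mHC|exact: measurable_cylinder|exact: subIsetr].
  - by rewrite exprn_ege1 // ler1n.
case: j => [|j].
  rewrite [X in prob P X](_ : _ = set0); last by apply/seteqP; split=> w [].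
  by rewrite /prob measure0 !mulr_ge0 ?prob_ge0 ?exprn_ge0.
(* Trial [n] is moved into the cylinder, which stays independent of [hits n]. *)
have ns : n \notin s by apply/negP => /sn; rewrite ltnn.
pose Ab B i := if i == n then B else A i.
have mAb B : measurable B -> forall i, measurable (Ab B i).
  by move=> mB i; rewrite /Ab; case: ifP.
have us' : uniq (n :: s) by rewrite /= ns.
have sn' : {in n :: s, forall i, n <= i}%N.
  by move=> i; rewrite inE => /orP[/eqP->//|/sn/ltnW].
have mnb : measurable (~` [set y | b y]) by exact: measurableC.
rewrite hits_ltS setIUl -!setIA /E preimage_setC.
rewrite -!(cylinder_cons_update _ _ _ _ ns).
apply: le_trans (prob_setU_le P _ _ (mHC _ _ _ _ (mAb _ mnb))
                                    (mHC _ _ _ _ (mAb _ mb))) _.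
apply: le_trans (lerD (IH _ _ _ us' sn' (mAb _ mnb))
                      (IH _ _ _ us' sn' (mAb _ mb))) _.
rewrite !cylinder_cons_update // !prob_preimageI_cylinder // prob_miss prob_hit.
set g := prob P (cylinder s A); set q := 1 - p / 2.
suff -> : 2 ^+ j.+1 * q ^+ n * ((1 - p) * g) + 2 ^+ j * q ^+ n * (p * g) =
  2 ^+ j.+1 * q ^+ n.+1 * g by [].
by rewrite !exprS /q; field.
Qed.

Lemma prob_hits_lt n j :
  prob P [set w | (hits n w < j)%N] <= 2 ^+ j * (1 - p / 2) ^+ n.
Proof.
have := @prob_hits_ltI_cylinder n j [::] (fun=> setT).
by rewrite cylinder_nil setIT prob_setT mulr1; apply=> // i.
Qed.

End independent_trials.

Section small_ball.
Context {R : realType} {dF : measure_display} {F : measurableType dF}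
  {d : F -> F -> R} {x : F} {dO : measure_display} {Om : measurableType dO}
  {P : probability Om R} {X : nat -> Om -> F}.
Hypotheses (d_ge0 : forall a b, 0 <= d a b)
  (mball : forall h, measurable (cball d x h))
  (mX0 : measurable_fun setT (X 0)).

Local Notation phi := (small_ball_prob P X d x).

Let mpre h : measurable (X 0 @^-1` cball d x h).
Proof. by rewrite -[X in measurable X]setTI; apply: mX0. Qed.

Lemma le_small_ball_prob h h' : h <= h' -> (phi h <= phi h')%E.
Proof.
move=> hh'; apply: le_measure; rewrite ?inE //.
by move=> w /=; rewrite /cball /= => /le_trans; apply.
Qed.

Lemma small_ball_prob_right_ge (a : \bar R) h :
  (forall m : nat, a <= phi (h + m.+1%:R^-1))%E -> (a <= phi h)%E.
Proof.
move=> ge_a; pose B m := X 0 @^-1` cball d x (h + m.+1%:R^-1).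
have capB : \bigcap_m B m = X 0 @^-1` cball d x h.
  apply/seteqP; split=> w /=; rewrite /cball /=.
    move=> Bw; rewrite leNgt; apply/negP => /ltr_add_invr[m].
    by apply/negP; rewrite -leNgt; exact: (Bw m).
  by move=> hw m _; apply: le_trans hw _; rewrite lerDl.
have decB : nonincreasing_seq B.
  move=> m m' mm'; apply/subsetPset => w.
  rewrite /B /cball /= => /le_trans; apply.
  by rewrite lerD2l lef_pV2 ?posrE // ler_nat ltnS.
have cvB : phi \o (fun m => h + m.+1%:R^-1) @ \oo --> phi h.
  rewrite /small_ball_prob -capB.
  apply: nonincreasing_cvg_mu => //; last by rewrite capB.
  by rewrite (le_lt_trans (probability_le1 _ _)) ?ltry.
rewrite -(cvg_lim _ cvB) //; apply: lime_ge; last exact: nearW.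
by apply/cvg_ex; exists (phi h).
Qed.

Lemma small_ball_inv_attained {t} : 0 < t -> (exists h, t%:E <= phi h)%E ->
  exists h, small_ball_inv P X d x t = h%:E /\ (t%:E <= phi h)%E.
Proof.
move=> t_gt0 [h0 phi_h0].
set inv := small_ball_inv P X d x t.
have h_ge0_of_t_le h : (t%:E <= phi h)%E -> 0 <= h.
  apply: contraTT; rewrite -ltNge => h_lt0.
  rewrite -ltNge /small_ball_prob (_ : cball d x h = set0).
    by rewrite preimage_set0 measure0 lte_fin.
  apply/seteqP; split=> // w; rewrite /cball /= => dh.
  by have := le_trans (d_ge0 w x) dh; rewrite leNgt h_lt0.
have inv_fin : inv \is a fin_num.
  rewrite ge0_fin_numE; last by apply/ereal_infP => _ [h /h_ge0_of_t_le ? <-].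
  by apply: le_lt_trans (ltry h0); apply: ereal_inf_lbound; exists h0.
exists (fine inv); split; first by rewrite fineK.
apply: small_ball_prob_right_ge => m.
have e_gt0 : 0 < (m.+1%:R : R)^-1 by rewrite invr_gt0.
have [_ [h phi_h <-]] := lb_ereal_inf_adherent e_gt0 inv_fin.
rewrite -[ereal_inf _]/inv -{1}(fineK inv_fin) -EFinD lte_fin => /ltW h_le.
by apply: le_trans phi_h _; apply: le_small_ball_prob.
Qed.

Lemma small_ball_inv_pinfty t : ~ (exists h, t%:E <= phi h)%E ->
  small_ball_inv P X d x t = +oo%E.
Proof.
move=> no_h; rewrite /small_ball_inv.
rewrite [X in ereal_inf X](_ : _ = set0) ?ereal_inf0 //.
by apply/seteqP; split=> [y [h t_le _]|//]; apply: no_h; exists h.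
Qed.

End small_ball.

Lemma knn_radius_le {R : realType} {dF : measure_display} {F : measurableType dF}
  {dO : measure_display} {Om : measurableType dO} (X : nat -> Om -> F)
  (d : F -> F -> R) (x : F) k n w h :
  (k <= hits X (fun y => (d y x <= h)%R) n w)%N ->
  (knn_radius X d x k n w <= h%:E)%E.
Proof. by move=> k_le; apply: ereal_inf_lbound; exists h. Qed.

Section knn_radius_bound.
Context {R : realType} {dF : measure_display} {F : measurableType dF}
  {d : F -> F -> R} {x : F} {dO : measure_display} {Om : measurableType dO}
  {P : probability Om R} {X : nat -> Om -> F} {k : nat -> nat}.
Hypotheses (d_ge0 : forall a b, 0 <= d a b)
  (mball : forall h, measurable (cball d x h))
  (mX : forall i, measurable_fun setT (X i))
  (indep : mutually_independent P X) (idd : identically_distributed P X).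

Local Notation t n := (2 * (k n)%:R / (n%:R : R)).
Local Notation phi := (small_ball_prob P X d x).

Definition few_hits n : set Om :=
  if pselect [/\ (3 <= n)%N, 3 * ln (n%:R : R) <= (1 - ln (2 : R)) * (k n)%:R &
                 exists h, ((t n)%:E <= phi h)%E]
  then [set w | (hits X (fun y => (d y x <= fine (small_ball_inv P X d x (t n)))%R)
                 n w < k n)%N]
  else set0.

Let t_gt0 n : (3 <= n)%N -> 3 * ln (n%:R : R) <= (1 - ln 2) * (k n)%:R ->
  0 < t n.
Proof.
move=> n_ge3 kn; rewrite !mulr_gt0 ?invr_gt0 ?ltr0n //; last by lia.
by apply: gt0_of_ln_le kn => //; lia.
Qed.

Lemma measurable_few_hits n : measurable (few_hits n).
Proof.
rewrite /few_hits; case: pselect => /= _ //.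
exact: measurable_hits_lt _ mX _ (mball _) _ _.
Qed.

Lemma prob_few_hits_le n :
  (P (few_hits n) <= ((n.+1%:R)^-1 - (n.+2%:R)^-1)%:E)%E.
Proof.
rewrite /few_hits; case: pselect => /= [[n_ge3 kn ex_h]|_]; last first.
  by rewrite measure0 lee_fin telescope_inv_ge0.
have [h [invE phi_h]] :=
  small_ball_inv_attained d_ge0 mball (mX 0) (t_gt0 _ n_ge3 kn) ex_h.
have mE : measurable (X 0 @^-1` cball d x h) by exact: measurable_preimage.
rewrite /small_ball_prob (probE _ _ mE) lee_fin in phi_h.
rewrite probE ?lee_fin ?invE /=; last first.
  exact: measurable_hits_lt _ mX _ (mball _) _ _.
apply: le_trans (prob_hits_lt _ _ mX indep idd _ (mball h) _ _) _.
apply: le_trans _ (inv_cube_le_telescope _ n_ge3).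
by apply: chernoff_bound_le_inv_cube => //; [exact: prob_ge0|exact: prob_le1|lia].
Qed.

Lemma knn_radius_le_small_ball_inv n w : (3 <= n)%N ->
  3 * ln (n%:R : R) <= (1 - ln 2) * (k n)%:R -> ~ few_hits n w ->
  (knn_radius X d x (k n) n w <= small_ball_inv P X d x (t n))%E.
Proof.
move=> n_ge3 kn not_few.
have [ex_h|no_h] := pselect (exists h, ((t n)%:E <= phi h)%E); last first.
  by rewrite small_ball_inv_pinfty ?leey.
have [h [invE _]] :=
  small_ball_inv_attained d_ge0 mball (mX 0) (t_gt0 _ n_ge3 kn) ex_h.
rewrite invE; apply: knn_radius_le; move: not_few; rewrite /few_hits.
case: pselect => /= [_|[]]; last by split.
by rewrite invE /= => /negP; rewrite -leqNgt.
Qed.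

End knn_radius_bound.

Theorem proposition1 (R : realType) (dF : measure_display) (F : measurableType dF)
  (d : F -> F -> R) (x : F)
  (dO : measure_display) (Om : measurableType dO) (P : probability Om R)
  (X : nat -> Om -> F) (k : nat -> nat) :
  semi_metric d ->
  (forall h : R, measurable (cball d x h)) ->
  (forall i, measurable_fun setT (X i)) ->
  mutually_independent P X ->
  identically_distributed P X ->
  (fun n => (k n)%:R / n%:R : R) @ \oo --> 0 ->
  (fun n => (k n)%:R / ln (n%:R) : R) @ \oo --> +oo ->
  {ae P, forall w, \forall n \near \oo,
      (knn_radius X d x (k n) n w
       <= small_ball_inv P X d x (2 * (k n)%:R / n%:R))%E}.
Proof.
move=> [d_ge0 _ _ _] mball mX indep idd _ k_ln.
have := ae_eventually_notin P (measurable_few_hits (k := k) mball mX)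
  (nneseries_le_telescope_lt_oo (fun n => measure_ge0 P _)
    (prob_few_hits_le (k := k) d_ge0 mball mX indep idd)).
apply: filterS => w not_few; near=> n.
apply: (knn_radius_le_small_ball_inv d_ge0 mball mX).
- by near: n; exact: nbhs_infty_ge.
- by near: n; apply: eventually_ln_le k_ln; rewrite subr_gt0 ln2_lt1.
- by near: n; exact: not_few.
Unshelve. all: by end_near.
Qed.
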